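(* Let $(\mathbb S,+,\cdot)$ be an S-Field and let $\alpha,\beta\in\mathbb S_0$ with $\alpha\neq0$, $\beta\neq0$ and $\alpha+\beta\neq 0$. Then $\frac{\alpha}{0}+\frac{\beta}{0}=\frac{\alpha+\beta}{0}$.
   Context: An S-Structure is a triple $(\mathbb S,+,\cdot)$ where $\mathbb S$ is a set and $+,\cdot$ are binary operations on $\mathbb S$ such that: $(\mathbb S,+)$ is a commutative group with identity $0$ (the inverse of $s$ is written $-s$, and $s-t:=s+(-t)$); $\mathbb S$ is closed under $\cdot$; and there exists $s\in\mathbb S$ with $0\cdot s\neq 0$ or $s\cdot 0\neq 0$. Multiplication binds tighter than addition. The structures considered come with a distinguished element of $\mathbb S$ denoted $1$. It is Commutative if $s\cdot t=t\cdot s$ for all $s,t$. For a Commutative S-Structure and $\alpha\in\mathbb S$, put $\mathbb S_\alpha=\{s\in\mathbb S:0\cdot s=s\cdot 0=\alpha\}$ and $\Lambda=\{\alpha\in\mathbb S:\mathbb S_\alpha\neq\emptyset\}$. Wheel Distributive: $s\cdot(t+r)+(s\cdot 0)=(s\cdot t)+(s\cdot r)$ for all $s,t,r\in\mathbb S$. S-Associative: for all $m,n\in\mathbb S_0$ and $s\in\mathbb S$, $m\cdot(n\cdot s)=(m\cdot n)\cdot s-([(m-1)\cdot(n-1)]\cdot(0\cdot s))$. Base: if $\mathbb S_0\neq\emptyset$ and $\alpha\in\Lambda$, $q\in\mathbb S_\alpha$ is a Base for $\mathbb S_\alpha$ if $q+\beta\in\mathbb S_\alpha$ for all $\beta\in\mathbb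 S_0$ and every $s\in\mathbb S_\alpha$ equals $q+\beta$ for some $\beta\in\mathbb S_0$. Coordinated: $\mathbb S_0\neq\emptyset$ and every $\mathbb S_\alpha$ with $\alpha\in\Lambda$ has a Base. Standard Bases: a Coordinated Commutative S-Structure has Standard Bases if there is a specified element $q_0(1)\in\mathbb S_1$ which is a Base for $\mathbb S_1$, and for every $\alpha\in\Lambda$ the element $q_0(\alpha):=\alpha\cdot(q_0(1)+1)-1$ lies in $\mathbb S_\alpha$ and is a Base for $\mathbb S_\alpha$. An Essential S-Structure is an S-Structure that is Commutative, Wheel Distributive, S-Associative, has Standard Bases (in particular is Coordinated), satisfies $0,1\in\mathbb S_0$, and satisfies $\mathbb S_0=\{1\cdot x:x\in\mathbb S_0\}$. A Unity is an element $e\in\Lambda$ with $e\cdot s=s\cdot e=s$ for all $s\in\mathbb S$. Scalar Inverses: the structure has a Unity $e$ and for every $x\in\mathbb S_0$ with $x\neq 0$ there is $x^{-1}\in\mathbb S_0$ with $x\cdot x^{-1}=x^{-1}\cdot x=e$. An S-Ring is an Essential S-Structure with a Unity; an S-Field is an S-Ring with Scalar Inverses. Reversible: for $\alpha\in\Lambda$, $q_0(\alpha)$ is Reversible if there exists $\alpha^*\in\Lambda$ with $q_0(1)=\alpha^*\cdot(q_0(\alpha)+\alpha)-\alpha$; then $q_0^*(\alpha):=q_0(\alpha)$. Division By Zero: in an S-Field, for $\alpha\in\mathbb S_0$ with $\alpha\neq0$, $\frac{\alpha}{0}:=q_0^*(\alpha)$. *)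

Record SData := {
  car : Type;
  sadd : car -> car -> car;
  sopp : car -> car;
  szero : car;
  smul : car -> car -> car;
  sone : car;
  sq01 : car
}.

Section SDefs.
Context (S : SData).
Local Notation "x + y" := (sadd S x y).
Local Notation "- x" := (sopp S x).
Local Notation "x - y" := (sadd S x (sopp S y)).
Local Notation "x * y" := (smul S x y).
Local Notation "0" := (szero S).
Local Notation "1" := (sone S).

(* S-Structure: (S,+) commutative group; closure under * is automatic;
   some s with 0*s <> 0 or s*0 <> 0. *)
Definition is_SStructure : Prop :=
  (forall x y z, x + (y + z) = (x + y) + z) /\
  (forall x y, x + y = y + x) /\
  (forall x, x + 0 = x) /\
  (forall x, x + (- x) = 0) /\
  (exists s, 0 * s <> 0 \/ s * 0 <> 0).

Definition Commutative : Prop := forall s t, s * t = t * s.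

Definition Sa (alpha s : car S) : Prop := 0 * s = alpha /\ s * 0 = alpha.
Definition S0 (s : car S) : Prop := Sa 0 s.
Definition Lambda (alpha : car S) : Prop := exists s, Sa alpha s.

Definition WheelDistributive : Prop :=
  forall s t r, s * (t + r) + (s * 0) = (s * t) + (s * r).

Definition SAssociative : Prop :=
  forall m n s, S0 m -> S0 n ->
    m * (n * s) = (m * n) * s - (((m - 1) * (n - 1)) * (0 * s)).

Definition is_Base (alpha q : car S) : Prop :=
  Sa alpha q /\
  (forall beta, S0 beta -> Sa alpha (q + beta)) /\
  (forall s, Sa alpha s -> exists beta, S0 beta /\ s = q + beta).

Definition Coordinated : Prop :=
  (exists s, S0 s) /\ (forall alpha, Lambda alpha -> exists q, is_Base alpha q).

Definition q0 (alpha : car S) : car S := alpha * (sq01 S + 1) - 1.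

(* Standard Bases; the defining formula for q0 at alpha = 1 must agree with
   the specified element q0(1). *)
Definition StandardBases : Prop :=
  Coordinated /\ Sa 1 (sq01 S) /\ is_Base 1 (sq01 S) /\
  q0 1 = sq01 S /\
  (forall alpha, Lambda alpha -> Sa alpha (q0 alpha) /\ is_Base alpha (q0 alpha)).

Definition is_Essential : Prop :=
  is_SStructure /\ Commutative /\ WheelDistributive /\ SAssociative /\
  StandardBases /\ S0 0 /\ S0 1 /\
  (forall y, S0 y <-> exists x, S0 x /\ y = 1 * x).

Definition is_Unity (e : car S) : Prop :=
  Lambda e /\ (forall s, e * s = s /\ s * e = s).

Definition ScalarInverses : Prop :=
  exists e, is_Unity e /\
    (forall x, S0 x -> x <> 0 -> exists xi, S0 xi /\ x * xi = e /\ xi * x = e).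

Definition is_SRing : Prop := is_Essential /\ exists e, is_Unity e.
Definition is_SField : Prop := is_SRing /\ ScalarInverses.

Definition Reversible (alpha : car S) : Prop :=
  Lambda alpha /\
  exists astar, Lambda astar /\ sq01 S = astar * (q0 alpha + alpha) - alpha.

(* Division by zero: alpha / 0 := q0*(alpha) = q0(alpha). *)
Definition div0 (alpha : car S) : car S := q0 alpha.

End SDefs.

(* Wheel distributivity with multiplier [q0(1) + 1] gives
   [(a + b)(q0(1) + 1) + (q0(1) + 1)·0 = a(q0(1) + 1) + b(q0(1) + 1)], and the
   correction term [(q0(1) + 1)·0] equals [1] (wheel distributivity again, now
   with multiplier [0], using [0·q0(1) = 1] and [0·1 = 0·0 = 0]).  Subtracting
   [1] twice yields [q0(a) + q0(b) = q0(a + b)] for all [a], [b]; the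
   nonvanishing hypotheses only serve to make [a/0], [b/0], [(a+b)/0] defined. *)

Section DivByZeroAdditive.

Variable S : SData.

Local Notation "x + y" := (sadd S x y).
Local Notation "- x" := (sopp S x).
Local Notation "x - y" := (sadd S x (sopp S y)).
Local Notation "x * y" := (smul S x y).
Local Notation "0" := (szero S).
Local Notation "1" := (sone S).
Local Notation q01 := (sq01 S).

Hypothesis addA : forall x y z, x + (y + z) = (x + y) + z.
Hypothesis addC : forall x y, x + y = y + x.
Hypothesis addr0 : forall x, x + 0 = x.
Hypothesis addrN : forall x, x + - x = 0.

Lemma sub_add_sub_of_add (a b c u : car S) :
  c + u = a + b -> (a - u) + (b - u) = c - u.
Proof.
  intros E.
  assert (Regroup : (a - u) + (b - u) = (a + b) + (- u + - u)).
  { rewrite <- !addA. f_equal. rewrite (addC (- u) (b - u)), <- addA. reflexivity. }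
  rewrite Regroup, <- E, <- addA, (addA u), addrN, (addC 0), addr0.
  reflexivity.
Qed.

Hypothesis mulC : Commutative S.
Hypothesis wheel_distr : WheelDistributive S.
Hypothesis zero_mul_q01 : 0 * q01 = 1.
Hypothesis zero_mul_one : 0 * 1 = 0.
Hypothesis zero_mul_zero : 0 * 0 = 0.

Lemma zero_mul_q01_add_one : 0 * (q01 + 1) = 1.
Proof.
  pose proof (wheel_distr 0 q01 1) as W.
  rewrite zero_mul_q01, zero_mul_one, zero_mul_zero, !addr0 in W.
  exact W.
Qed.

Lemma q0_add (a b : car S) : q0 S a + q0 S b = q0 S (a + b).
Proof.
  unfold q0. apply sub_add_sub_of_add.
  pose proof (wheel_distr (q01 + 1) a b) as W.
  rewrite (mulC _ 0), zero_mul_q01_add_one, !(mulC (q01 + 1)) in W.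
  exact W.
Qed.

End DivByZeroAdditive.

Theorem proposition4p2p5 (S : SData) (HS : is_SField S)
  (alpha beta : car S)
  (Ha : S0 S alpha) (Hb : S0 S beta)
  (Ha0 : alpha <> szero S) (Hb0 : beta <> szero S)
  (Hab0 : sadd S alpha beta <> szero S) :
  sadd S (div0 S alpha) (div0 S beta) = div0 S (sadd S alpha beta).
Proof.
  destruct HS as [[[HSS [mulC [wheel_distr [_ [HSB [[zero_mul_zero _] [[zero_mul_one _] _]]]]]]] _] _].
  destruct HSS as [addA [addC [addr0 [addrN _]]]].
  destruct HSB as [_ [[zero_mul_q01 _] _]].
  exact (q0_add S addA addC addr0 addrN mulC wheel_distr
           zero_mul_q01 zero_mul_one zero_mul_zero alpha beta).
Qed.
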